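(* Let $m\in\mathbb{N}$ and let $G$ be a bipartite graph with parts $X$ and $Y$, where $Y\neq\emptyset$, such that $|X|\geq |Y|+2m$ and every vertex in $Y$ has degree at least $|X|-m$. Then $G$ contains a collection of at most $\lfloor |X|/|Y|\rfloor$ paths whose union covers all vertices of $Y$ and all but $|Y|+2m$ vertices of $X$.
   Context: Paths may have length zero and need not be vertex-disjoint. *)

From mathcomp Require Import all_boot.
Set Implicit Arguments. Unset Strict Implicit. Unset Printing Implicit Defensive.

Definition simple_graph (T : finType) (e : rel T) : Prop :=
  irreflexive e /\ symmetric e.

Definition bipartite_with (T : finType) (e : rel T) (X Y : {set T}) : Prop :=
  [/\ [disjoint X & Y], X :|: Y = [set: T] &
      forall u v, e u v -> (u \in X) && (v \in Y) || (u \in Y) && (v \in X)].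

Definition deg (T : finType) (e : rel T) (v : T) : nat := #|[set u | e v u]|.

(* A path in the graph: a nonempty sequence of pairwise distinct vertices,
   consecutive ones adjacent.  A single vertex is a path of length zero. *)
Definition gpath (T : finType) (e : rel T) (s : seq T) : bool :=
  [&& s != [::], uniq s & sorted e s].

Definition covered (T : finType) (P : seq (seq T)) (v : T) : bool :=
  has (fun s => v \in s) P.

From mathcomp Require Import all_boot.
From mathcomp Require Import zify.

Set Implicit Arguments.
Unset Strict Implicit.
Unset Printing Implicit Defensive.

(* Each vertex of Y misses at most m vertices of X, so two vertices of Y have
   at least |U| - 2m - |A| common neighbours in U \ A, for any U included in X.
   Hence, while some U included in X still has |Y| + 2m vertices, one threads a
   path y_0 x_0 y_1 x_1 ... y_k x_k through all of Y = {y_0, ..., y_k}, where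
   x_i is a fresh common neighbour in U of y_i and y_(i+1) (a neighbour of y_k
   for i = k).  Removing from U the |Y| vertices x_i and iterating yields at
   most |X| / |Y| paths and leaves fewer than |Y| + 2m vertices of X uncovered. *)

Section PathCover.

Variables (T : finType) (e : rel T) (X Y : {set T}) (m : nat).
Hypothesis e_sym : symmetric e.
Hypothesis XY_bipartite : bipartite_with e X Y.
Hypothesis deg_Y : forall y, y \in Y -> #|X| - m <= deg e y.

Lemma notin_X y : y \in Y -> y \notin X.
Proof. by case: XY_bipartite => dXY _ _ yY; rewrite (disjointFl dXY yY). Qed.

Lemma neq_XY x y : x \in X -> y \in Y -> (x == y) = false.
Proof. by move=> xX yY; apply: contraTF xX => /eqP ->; exact: notin_X. Qed.

Lemma card_non_neighbors y : y \in Y -> #|X :\: [set u | e y u]| <= m.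
Proof.
move=> yY; case: XY_bipartite => _ _ e_XY.
have sNX : [set u | e y u] \subset X.
  apply/subsetP => u; rewrite inE => /e_XY.
  by rewrite (negbTE (notin_X yY)) /= => /andP[].
by rewrite cardsDS //; have := deg_Y yY; rewrite /deg; lia.
Qed.

Lemma exists_common_neighbor (U A : {set T}) y y' :
    U \subset X -> y \in Y -> y' \in Y -> #|A| + 2 * m < #|U| ->
  exists2 x, x \in U :\: A & e y x && e y' x.
Proof.
move=> sUX yY y'Y ltAU.
pose C := [set x in U :\: A | e y x && e y' x].
have sU : U \subset A :|: C :|: (X :\: [set u | e y u]) :|: (X :\: [set u | e y' u]).
  apply/subsetP => x xU; rewrite !inE xU (subsetP sUX x xU) /= !andbT.
  by case: (x \in A); case: (e y x); case: (e y' x).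
have cardU : #|U| <= #|A| + #|C| + m + m.
  apply: leq_trans (subset_leq_card sU) _.
  apply: leq_trans (leq_card_setU _ _).1 (leq_add _ (card_non_neighbors y'Y)).
  apply: leq_trans (leq_card_setU _ _).1 (leq_add _ (card_non_neighbors yY)).
  exact: (leq_card_setU _ _).1.
have /card_gt0P[x] : 0 < #|C| by lia.
by rewrite inE => /andP[]; exists x.
Qed.

Lemma alternating_path (U : {set T}) (ys : seq T) y0 :
    U \subset X -> y0 \in Y -> {subset ys <= Y} -> uniq (y0 :: ys) ->
    (size ys).+1 + 2 * m <= #|U| ->
  exists (A : {set T}) (p : seq T),
    [/\ A \subset U, #|A| = (size ys).+1, path e y0 p, uniq (y0 :: p) &
         forall z, (z \in p) = (z \in ys) || (z \in A)].
Proof.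
move=> sUX; elim: ys y0 => [|y ys IH] y0 y0Y ysY uy0ys leU.
  have [|x] := @exists_common_neighbor U set0 y0 y0 sUX y0Y y0Y.
    by rewrite cards0; lia.
  rewrite setD0 andbb => xU ey0x.
  exists [set x], [:: x]; split.
  - by rewrite sub1set.
  - by rewrite cards1.
  - by rewrite /= ey0x.
  - by rewrite /= inE eq_sym neq_XY ?(subsetP sUX).
  - by move=> z; rewrite !inE.
have yY : y \in Y by apply: ysY; exact: mem_head.
have ysY' : {subset ys <= Y} by move=> z zys; apply: ysY; rewrite inE zys orbT.
move: uy0ys; rewrite /= inE negb_or => /and3P[/andP[y0y y0ys] yys uys].
have [||A [p [sAU cardA ep uyp memp]]] := IH y yY ysY'; first by rewrite /= yys.
  by move: leU => /=; lia.
have [|x /setDP[xU xA] /andP[ey0x eyx]] :=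
  @exists_common_neighbor U A y0 y sUX y0Y yY.
  by move: leU => /=; lia.
have xX : x \in X := subsetP sUX x xU.
have xp : x \notin p.
  rewrite memp (negbTE xA) orbF; apply: contraTN xX => /ysY'; exact: notin_X.
have y0p : y0 \notin p.
  rewrite memp (negbTE y0ys) /=.
  by apply: contraNN (notin_X y0Y) => /(subsetP sAU)/(subsetP sUX).
exists (x |: A), [:: x, y & p]; split.
- by rewrite subUset sub1set xU.
- by rewrite cardsU1 xA cardA.
- by rewrite /= ey0x e_sym eyx.
- by rewrite /= !inE !negb_or (negbTE y0p) (negbTE xp) y0y eq_sym !(neq_XY xX).
- by move=> z; rewrite !inE memp -!orbA orbCA (orbCA (z == x)).
Qed.

Lemma path_cover (U : {set T}) : 0 < #|Y| -> U \subset X ->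
  exists P : seq (seq T),
    [/\ all (gpath e) P, (forall s, s \in P -> {subset Y <= s}),
        size P * #|Y| <= #|U| &
        #|[set x in U | ~~ covered P x]| < #|Y| + 2 * m].
Proof.
move=> Y_gt0; elim: {U}_.+1 {-2}U (ltnSn #|U|) => // n IH U ltUn sUX.
have [small | big] := ltnP #|U| (#|Y| + 2 * m).
  exists [::]; split=> //; apply: leq_ltn_trans small.
  by apply: subset_leq_card; apply/subsetP => x; rewrite inE => /andP[].
have enumY_uniq := enum_uniq (mem Y).
have memY z : (z \in Y) = (z \in enum Y) by rewrite mem_enum.
have cardY : #|Y| = size (enum Y) by rewrite cardE.
case Ey: (enum Y) cardY enumY_uniq => [|y0 ys] cardY uy0ys; first by rewrite cardY in Y_gt0.
have y0Y : y0 \in Y by rewrite memY Ey mem_head.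
have ysY : {subset ys <= Y} by move=> z zys; rewrite memY Ey inE zys orbT.
have [|A [p [sAU cardA ep uy0p memp]]] := alternating_path sUX y0Y ysY uy0ys.
  by rewrite cardY in big.
have cardUA : #|U :\: A| = #|U| - #|Y| by rewrite cardsDS // cardA cardY.
have ltUAn : #|U :\: A| < n by rewrite cardUA; lia.
have sUAX : U :\: A \subset X by rewrite (subset_trans (subsetDl U A)).
have [P [Pg PY sizeP uncovP]] := IH (U :\: A) ltUAn sUAX.
exists ((y0 :: p) :: P); split.
- by rewrite /= Pg andbT; apply/and3P.
- move=> s; rewrite inE => /orP[/eqP -> z | /PY //].
  by rewrite memY Ey !inE memp => /orP[-> | ->]; rewrite ?orbT.
- by rewrite /= mulSn; lia.
- apply: leq_ltn_trans uncovP; apply: subset_leq_card; apply/subsetP => x.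
  rewrite !inE /covered /= in_cons memp !negb_or.
  by case/andP=> -> /andP[/andP[_ /andP[_ ->]] ->].
Qed.

End PathCover.

Theorem lemma2p3 (T : finType) (e : rel T) (X Y : {set T}) (m : nat) :
  simple_graph e ->
  bipartite_with e X Y ->
  Y != set0 ->
  #|Y| + 2 * m <= #|X| ->
  (forall y, y \in Y -> #|X| - m <= deg e y) ->
  exists P : seq (seq T),
    [/\ size P <= #|X| %/ #|Y|,
        all (gpath e) P,
        (forall y, y \in Y -> covered P y) &
        #|[set x in X | ~~ covered P x]| <= #|Y| + 2 * m].
Proof.
move=> [_ e_sym] XY_bip Y_neq0 bigX deg_Y.
have Y_gt0 : 0 < #|Y| by rewrite card_gt0.
have [P [Pg PY sizeP uncovP]] := path_cover e_sym XY_bip deg_Y Y_gt0 (subxx X).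
exists P; split=> //; last exact: ltnW.
- by rewrite leq_divRL.
- case: P {Pg sizeP} PY uncovP => [|s P] PY uncovP y yY.
    suff uncovX : [set x in X | ~~ covered [::] x] = X.
      by rewrite uncovX ltnNge bigX in uncovP.
    by apply/setP => x; rewrite inE andbT.
  by rewrite /covered /= (PY s (mem_head _ _) y yY).
Qed.
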